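(* For every $x\in(0,\pi)$ and $\theta>0$, $$\lim_{n\to\infty}\sqrt n\sum_{k\ge1}\frac{\sin^2(kx)}{k^2}\big(1-e^{-\theta k^2/n}\big)=\frac{\sqrt{\pi\theta}}{2}.$$ *)

From Stdlib Require Import Reals.
From Coquelicot Require Import Coquelicot.
Open Scope R_scope.

(* Term of index k >= 1 of the series, written with index j = k - 1 >= 0:
   sin^2(k x)/k^2 * (1 - exp(-theta k^2 / n)). *)
Definition termA4 (x theta : R) (n j : nat) : R :=
  let k := INR (S j) in
  (sin (k * x)) ^ 2 / k ^ 2 * (1 - exp (- theta * k ^ 2 / INR n)).

(* Write sin^2(k x) = (1 - cos(2 k x)) / 2 and h = 1 / sqrt n, so that
   sin^2(k x) / k^2 * (1 - exp(- theta k^2 / n)) = (1 - cos(2 k x)) / 2 * h^2 g(k h)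
   with g(t) = (1 - exp(- theta t^2)) / t^2.  The non-oscillating half is h/2 times the
   Riemann sum sum_k h g(k h) of the decreasing function g, whose primitive
   F(t) = 2 sqrt theta * int_0^(sqrt theta t) exp(- s^2) ds - t g(t) tends to
   sqrt(pi theta) at infinity (Gauss integral) and is O(t) at 0; comparing the sum
   with F on the grid shows that it is sqrt(pi theta) + O(h).  The oscillating half
   is handled by Abel summation: the partial sums of cos(2 k x) are bounded by
   1 / sin x and the weights h^2 g(k h) decrease from at most theta h^2.  Hence
   sqrt n times the series is sqrt(pi theta) / 2 + O(1 / sqrt n). *)

From Stdlib Require Import Reals Lra Lia.
From Coquelicot Require Import Coquelicot.
Open Scope R_scope.
From mathcomp Require all_boot all_order all_algebra all_classical all_reals.
From mathcomp Require topology normedtype sequences derive realfun exp trigo.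
From mathcomp Require measure lebesgue_measure lebesgue_integral ftc gauss_integral.
From mathcomp Require Rstruct Rstruct_topology.

Module Gauss.
Import all_boot all_order all_algebra all_classical all_reals.
Import topology normedtype sequences derive realfun exp trigo.
Import measure lebesgue_measure lebesgue_integral ftc gauss_integral.
Import Rstruct Rstruct_topology.
Import Order.TTheory GRing.Theory Num.Theory numFieldNormedType.Exports.
Local Open Scope classical_set_scope.
Local Open Scope ring_scope.

Lemma RcosE (x : R) : Rtrigo_def.cos x = cos x.
Proof.
rewrite /Rtrigo_def.cos; case: exist_cos => y.
rewrite /cos_in /infinite_sum => cos_ub.
suff cvg_y : series (cos_coeff' x) @ \oo --> y.
  exact: cvg_unique _ cvg_y (@cvg_cos_coeff' _ x).
rewrite -cvg_shiftS /=; apply/(@cvgrPdist_lt _ R^o) => e /RltP /cos_ub[N HN].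
near=> n.
have nN : (n >= N)%coq_nat by apply/ssrnat.leP; near: n; exact: nbhs_infty_ge.
move: HN => /(_ _ nN) /[!RdistE] /RltP /=.
rewrite distrC sum_f_R0E; congr (`| _ - _ | < e).
apply: eq_bigr => k _; rewrite /cos_n /cos_coeff' RdivE RpowE INRE factE.
rewrite RpowE /Rsqr -exprnP mulrAC -mul2n exprM expr2.
by congr (_ * _ * _); congr (_`!%:R^-1); rewrite -mul2n.
Unshelve. all: by end_near. Qed.

(* [pi / 2] is the zero of [cos] in [[0, 2]], which characterises [PI / 2]. *)
Lemma RpiE : PI = pi.
Proof.
have [/andP[/RleP h0 /RleP h2] hc] := @pihalf_02_cos_pihalf R.
rewrite -RcosE in hc.
change (Rle (IZR 0) (Rdiv pi 2)) in h0.
change (Rle (Rdiv pi 2) 2) in h2.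
change (Rtrigo_def.cos (Rdiv pi 2) = IZR 0) in hc.
have PI2_ge1 := PI2_1.
have [E|E] := cos_eq_0_2PI_0 _ h0 ltac:(lra) hc; last by lra.
have -> : PI = Rmult (Rdiv PI 2) 2 by field.
by rewrite -E; field.
Qed.

Definition gauss_int0 (y : R) : R := gauss_integral_proof.integral0_gauss y.

Lemma gauss_int0_ge0 (y : R) : Rle 0 (gauss_int0 y).
Proof. exact/RleP/gauss_integral_proof.integral0_gauss_ge0. Qed.

Lemma gauss_int0_le (y : R) : Rle 0 y -> Rle (gauss_int0 y) y.
Proof.
move=> /RleP y0; apply/RleP; rewrite /gauss_int0 /gauss_integral_proof.integral0_gauss.
apply: (@le_trans _ _ (\int[lebesgue_measure]_(t in `[0, y]) cst (1:Rdefinitions.R) t)).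
  apply: le_Rintegral => //.
  - apply: continuous_compact_integrable; first exact: segment_compact.
    exact/continuous_subspaceT/continuous_gauss_fun.
  - apply: continuous_compact_integrable; first exact: segment_compact.
    by apply: continuous_subspaceT => x; exact: cst_continuous.
  - by move=> x _; exact: gauss_fun_le1.
rewrite Rintegral_cst //.
have := @lebesgue_measure_itv R `[0, y].
rewrite /= lte_fin => ->; rewrite mul1r.
by case: ifP => _ /=; rewrite ?oppr0 ?adde0 /= ?addr0.
Qed.

Lemma gauss_int0_derive (y : R) : Rlt 0 y ->
  derivable_pt_lim gauss_int0 y (Rtrigo_def.exp (Ropp (Rmult y y))).
Proof.
move=> /RltP y0.
have [dF dFE] : derivable (gauss_int0 : R^o -> R^o) y 1 /\
    derive1 (gauss_int0 : R^o -> R^o) y = gauss_fun y.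
  apply: (@continuous_FTC1 _ gauss_fun (BLeft 0) _ (y + 1)).
  - by rewrite ltrDl.
  - apply: continuous_compact_integrable; first exact: segment_compact.
    by apply: continuous_subspaceT; exact: continuous_gauss_fun.
  - by rewrite /= lte_fin.
  - by move=> ?; exact: continuous_gauss_fun.
have quotient_cvg : (fun h : R^o => h^-1 *: (((gauss_int0 : R^o -> R^o) \o shift y)
    (h *: (1 : R^o)) - gauss_int0 y)) @ (0 : R^o)^' --> (gauss_fun y : R^o).
  by rewrite -dFE derive1E; exact: dF.
move=> eps /RltP eps0.
move/(@cvgrPdist_lt _ R^o): quotient_cvg => /(_ eps eps0).
rewrite /dnbhs /within => /nbhs_norm0P [/= e e0 He].
exists (mkposreal e (RltP e0)) => h /eqP h0 /RltP he; apply/RltP.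
move: (He h he h0); rewrite RabsE distrC /gauss_fun -RexpE expr2.
by rewrite /GRing.scale /= mulr1 RdivE RplusE mulrC (addrC y h).
Qed.

Lemma is_lim_gauss_int0 : is_lim gauss_int0 p_infty (Rdiv (R_sqrt.sqrt PI) 2).
Proof.
have cvg_gauss_int0 : gauss_int0 x @[x --> +oo] --> Num.sqrt pi / 2.
  have sqrt_pi4 : Num.sqrt (pi / 4) = Num.sqrt pi / 2 :> R.
    rewrite sqrtrM ?pi_ge0 // sqrtrV // (_ : 4 = 2 ^+ 2) ?sqrtr_sqr ?ger0_norm //.
    by rewrite expr2 -natrM.
  have sqrtK : (fun x => Num.sqrt (gauss_int0 x ^+ 2)) = gauss_int0.
    by apply/funext => x; rewrite sqrtr_sqr ger0_norm //; exact/RleP/gauss_int0_ge0.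
  rewrite -sqrt_pi4 -sqrtK; apply: continuous_cvg; first exact: sqrt_continuous.
  exact: gauss_integral_proof.cvg_integral0_gauss_sqr.
apply/is_lim_spec => -[eps /= /RltP eps0].
move/(@cvgrPdist_lt _ R^o): cvg_gauss_int0 => /(_ eps eps0) [M [_ HM]].
exists M => y /RltP My; apply/RltP.
by rewrite RabsE distrC RsqrtE RpiE RdivE; exact: HM.
Qed.
End Gauss.

Lemma MVT_antitone_bounds (F G : R -> R) (a b : R) : a < b ->
  (forall c, a <= c <= b -> derivable_pt_lim F c (G c)) ->
  (forall c, a <= c <= b -> G b <= G c <= G a) ->
  (b - a) * G b <= F b - F a <= (b - a) * G a.
Proof.
  intros Hab HF HG.
  destruct (MVT_cor2 F G a b Hab HF) as [c [-> Hc]].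
  destruct (HG c ltac:(lra)).
  split; rewrite (Rmult_comm (G c)); apply Rmult_le_compat_l; lra.
Qed.

Section RiemannSumAntitone.

Variables (F g : R -> R) (L h : R).
Hypothesis F_derive : forall t, 0 < t -> derivable_pt_lim F t (g t).
Hypothesis g_ge0 : forall t, 0 < t -> 0 <= g t.
Hypothesis g_antitone : forall s t, 0 < s <= t -> g t <= g s.
Hypothesis F_lim : is_lim F p_infty L.
Hypothesis h_gt0 : 0 < h.

Lemma riemann_step (m : R) : 0 < m ->
  h * g ((m + 1) * h) <= F ((m + 1) * h) - F (m * h) <= h * g (m * h).
Proof.
  intros Hm.
  assert (H := MVT_antitone_bounds F g (m * h) ((m + 1) * h)).
  replace ((m + 1) * h - m * h) with h in H by ring.
  apply H.
  - nra.
  - intros c Hc. apply F_derive. nra.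
  - intros c Hc. split; apply g_antitone; nra.
Qed.

Lemma riemann_partial_sum_bounds (N : nat) :
  F ((INR N + 2) * h) - F h <= sum_n (fun j => h * g ((INR j + 1) * h)) N
  <= F ((INR N + 1) * h) - F h + h * g h.
Proof.
  induction N as [|N IH].
  - rewrite sum_O. simpl INR.
    destruct (riemann_step 1 Rlt_0_1) as [A B].
    replace ((0 + 1) * h) with (1 * h) by ring.
    replace ((0 + 2) * h) with ((1 + 1) * h) by ring.
    replace (1 * h) with h in * by ring. lra.
  - rewrite sum_Sn. change plus with Rplus. rewrite S_INR.
    assert (HN := pos_INR N).
    destruct (riemann_step (INR N + 2) ltac:(lra)) as [_ B].
    destruct (riemann_step (INR N + 1) ltac:(lra)) as [A _].
    replace (INR N + 1 + 2) with (INR N + 2 + 1) by ring.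
    replace (INR N + 1 + 1) with (INR N + 2) in * by ring.
    lra.
Qed.

Lemma is_lim_seq_F_grid (c : R) : 0 <= c ->
  is_lim_seq (fun N => F ((INR N + c) * h)) L.
Proof.
  intros Hc. apply (is_lim_comp_seq F _ p_infty L F_lim).
  - exists O. easy.
  - apply is_lim_seq_spec. intros M.
    destruct (INR_unbounded (M / h)) as [N0 HN0].
    exists N0. intros n Hn. apply le_INR in Hn.
    apply (Rmult_lt_reg_r (/ h)); [apply Rinv_0_lt_compat; lra|].
    replace ((INR n + c) * h * / h) with (INR n + c) by (field; lra).
    unfold Rdiv in HN0. lra.
Qed.

Lemma F_grid_le_lim (N : nat) : F ((INR N + 1) * h) <= L.
Proof.
  apply (is_lim_seq_incr_compare (fun N => F ((INR N + 1) * h))).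
  - apply is_lim_seq_F_grid; lra.
  - intros n. rewrite S_INR. assert (Hn := pos_INR n).
    destruct (riemann_step (INR n + 1) ltac:(lra)) as [A _].
    assert (0 <= g ((INR n + 1 + 1) * h)) by (apply g_ge0; nra). nra.
Qed.

Lemma riemann_sum_bounds :
  ex_series (fun j => h * g ((INR j + 1) * h)) /\
  L - F h <= Series (fun j => h * g ((INR j + 1) * h)) <= L - F h + h * g h.
Proof.
  set (a j := h * g ((INR j + 1) * h)).
  assert (Ha : forall j, 0 <= a j).
  { intros j. assert (Hj := pos_INR j). unfold a.
    assert (0 <= g ((INR j + 1) * h)) by (apply g_ge0; nra). nra. }
  destruct (ex_finite_lim_seq_incr (sum_n a) (L - F h + h * g h)) as [l Hl].
  - intros n. rewrite sum_Sn. change plus with Rplus. specialize (Ha (S n)). lra.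
  - intros n. destruct (riemann_partial_sum_bounds n) as [_ Hup].
    pose proof (F_grid_le_lim n). eapply Rle_trans; [exact Hup | lra].
  - assert (Hs : is_series a l) by exact Hl.
    split; [now exists l|].
    rewrite (is_series_unique _ _ Hs).
    assert (Hlow := is_lim_seq_minus' _ _ _ _ (is_lim_seq_F_grid 2 ltac:(lra))
                      (is_lim_seq_const (F h))).
    assert (Hup := is_lim_seq_plus' _ _ _ _ (is_lim_seq_minus' _ _ _ _
                      (is_lim_seq_F_grid 1 ltac:(lra)) (is_lim_seq_const (F h)))
                      (is_lim_seq_const (h * g h))).
    split.
    + apply (is_lim_seq_le _ _ _ _ (fun N => proj1 (riemann_partial_sum_bounds N)) Hlow Hl).
    + apply (is_lim_seq_le _ _ _ _ (fun N => proj2 (riemann_partial_sum_bounds N)) Hl Hup).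
Qed.

End RiemannSumAntitone.

Definition expN_ratio (u : R) : R := (1 - exp (- u)) / u.

Lemma expN_ratio_gt0 (u : R) : 0 < u -> 0 < expN_ratio u.
Proof.
  intros Hu. apply Rdiv_lt_0_compat; [|lra].
  rewrite <- exp_0. assert (exp (- u) < exp 0) by (apply exp_increasing; lra). lra.
Qed.

Lemma expN_ratio_le1 (u : R) : 0 < u -> expN_ratio u <= 1.
Proof.
  intros Hu. assert (H := exp_ineq1_le (- u)). unfold expN_ratio.
  apply (Rmult_le_reg_r u); [lra|]. unfold Rdiv. rewrite Rmult_assoc, Rinv_l; lra.
Qed.

Lemma expN_ratio_antitone (u v : R) : 0 < u -> u <= v -> expN_ratio v <= expN_ratio u.
Proof.
  intros Hu Huv. destruct (Rle_lt_or_eq_dec _ _ Huv) as [Hlt|<-]; [|lra].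
  destruct (MVT_cor2 expN_ratio (fun w => (exp (- w) * (1 + w) - 1) / (w * w)) u v Hlt)
    as [c [Hc1 Hc2]].
  - intros c Hc. apply is_derive_Reals. unfold expN_ratio. auto_derive; [lra|field; lra].
  - (* [exp c >= 1 + c] makes the derivative nonpositive *)
    assert (Hexp : exp (- c) * (1 + c) <= 1).
    { replace 1 with (exp (- c) * exp c) at 2 by (rewrite <- exp_plus, Rplus_opp_l; apply exp_0).
      apply Rmult_le_compat_l; [apply Rlt_le, exp_pos | apply exp_ineq1_le]. }
    assert ((exp (- c) * (1 + c) - 1) / (c * c) <= 0).
    { apply Rmult_le_0_r; [lra|]. left; apply Rinv_0_lt_compat; nra. }
    assert ((exp (- c) * (1 + c) - 1) / (c * c) * (v - u) <= 0) by (apply Rmult_le_0_r; lra).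
    lra.
Qed.

Definition gauss_weight (theta t : R) : R :=
  (1 - exp (- (theta * (t * t)))) / (t * t).

Definition gauss_weight_primitive (theta t : R) : R :=
  2 * sqrt theta * Gauss.gauss_int0 (sqrt theta * t) - t * gauss_weight theta t.

Section GaussWeight.

Variable theta : R.
Hypothesis theta_gt0 : 0 < theta.

Lemma gauss_weight_expN_ratio (t : R) : 0 < t ->
  gauss_weight theta t = theta * expN_ratio (theta * (t * t)).
Proof.
  intros Ht. assert (0 < theta * (t * t)) by (apply Rmult_lt_0_compat; nra).
  unfold gauss_weight, expN_ratio. field. split; apply Rgt_not_eq; nra.
Qed.

Lemma gauss_weight_bounds (t : R) : 0 < t -> 0 < gauss_weight theta t <= theta.
Proof.
  intros Ht. rewrite gauss_weight_expN_ratio by lra.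
  assert (Hu : 0 < theta * (t * t)) by (apply Rmult_lt_0_compat; nra).
  pose proof (expN_ratio_gt0 _ Hu). pose proof (expN_ratio_le1 _ Hu).
  split; nra.
Qed.

Lemma gauss_weight_antitone (s t : R) : 0 < s <= t ->
  gauss_weight theta t <= gauss_weight theta s.
Proof.
  intros Hst. rewrite !gauss_weight_expN_ratio by lra.
  apply Rmult_le_compat_l; [lra|].
  apply expN_ratio_antitone; [apply Rmult_lt_0_compat|apply Rmult_le_compat_l]; nra.
Qed.

Lemma gauss_weight_primitive_derive (t : R) : 0 < t ->
  derivable_pt_lim (gauss_weight_primitive theta) t (gauss_weight theta t).
Proof.
  intros Ht. apply is_derive_Reals.
  assert (Hsq := sqrt_sqrt theta (Rlt_le _ _ theta_gt0)).
  assert (HPhi : is_derive Gauss.gauss_int0 (sqrt theta * t)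
                   (exp (- (sqrt theta * t * (sqrt theta * t))))).
  { apply is_derive_Reals, Gauss.gauss_int0_derive.
    pose proof (sqrt_lt_R0 _ theta_gt0). nra. }
  unfold gauss_weight_primitive, gauss_weight. auto_derive.
  - repeat split; [now exists (exp (- (sqrt theta * t * (sqrt theta * t))))|].
    apply Rgt_not_eq. nra.
  - replace (Derive _ _) with (exp (- (sqrt theta * t * (sqrt theta * t))))
      by (symmetry; now apply is_derive_unique).
    set (s := sqrt theta) in *. rewrite <- Hsq.
    replace (s * t * (s * t)) with (s * s * (t * t)) by ring.
    field. apply Rgt_not_eq; lra.
Qed.

Lemma gauss_weight_primitive_bounds (h : R) : 0 < h ->
  - (h * gauss_weight theta h) <= gauss_weight_primitive theta h
  <= 2 * theta * h - h * gauss_weight theta h.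
Proof.
  intros Hh. unfold gauss_weight_primitive.
  assert (Hsq := sqrt_sqrt theta (Rlt_le _ _ theta_gt0)).
  assert (Hs := sqrt_lt_R0 _ theta_gt0).
  set (s := sqrt theta) in *.
  pose proof (Gauss.gauss_int0_ge0 (s * h)).
  pose proof (Gauss.gauss_int0_le (s * h) ltac:(nra)).
  assert (s * Gauss.gauss_int0 (s * h) <= s * (s * h)) by (apply Rmult_le_compat_l; lra).
  split; nra.
Qed.

Lemma is_lim_gauss_weight_primitive :
  is_lim (gauss_weight_primitive theta) p_infty (sqrt (PI * theta)).
Proof.
  assert (Hs := sqrt_lt_R0 _ theta_gt0).
  set (s := sqrt theta) in *.
  assert (Hscale : is_lim (fun t => s * t) p_infty p_infty).
  { apply is_lim_spec. intros M. exists (M / s). intros t Ht.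
    apply (Rmult_lt_reg_r (/ s)); [apply Rinv_0_lt_compat; lra|].
    replace (s * t * / s) with t by (field; lra). exact Ht. }
  assert (Hgauss := is_lim_comp _ _ p_infty _ p_infty
                      Gauss.is_lim_gauss_int0 Hscale ltac:(now exists 0)).
  assert (Htail : is_lim (fun t => t * gauss_weight theta t) p_infty 0).
  { apply (is_lim_le_le_loc (fun _ => 0) (fun t => / t)).
    - exists 0. intros t Ht. unfold gauss_weight.
      pose proof (exp_pos (- (theta * (t * t)))).
      assert (0 < theta * (t * t)) by (apply Rmult_lt_0_compat; nra).
      assert (exp (- (theta * (t * t))) < 1)
        by (rewrite <- exp_0; apply exp_increasing; lra).
      replace (t * ((1 - exp (- (theta * (t * t)))) / (t * t)))
        with ((1 - exp (- (theta * (t * t)))) * / t) by (field; apply Rgt_not_eq; lra).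
      pose proof (Rinv_0_lt_compat _ Ht). split; nra.
    - apply is_lim_const.
    - exact (is_lim_inv _ _ _ (is_lim_id p_infty) ltac:(easy)). }
  replace (sqrt (PI * theta)) with (2 * s * (sqrt PI / 2) - 0)
    by (unfold s; rewrite sqrt_mult by (pose proof PI_RGT_0; lra); field).
  apply is_lim_minus'; [|exact Htail].
  exact (is_lim_scal_l _ (2 * s) _ _ Hgauss).
Qed.

Lemma gauss_riemann_sum (h : R) : 0 < h ->
  ex_series (fun j => h * gauss_weight theta ((INR j + 1) * h)) /\
  Rabs (Series (fun j => h * gauss_weight theta ((INR j + 1) * h)) - sqrt (PI * theta))
    <= 2 * theta * h.
Proof.
  intros Hh.
  destruct (riemann_sum_bounds (gauss_weight_primitive theta) (gauss_weight theta)
              (sqrt (PI * theta)) h gauss_weight_primitive_derive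
              (fun t Ht => Rlt_le _ _ (proj1 (gauss_weight_bounds t Ht)))
              gauss_weight_antitone is_lim_gauss_weight_primitive Hh)
    as [Hex [Hlow Hup]].
  split; [exact Hex|].
  pose proof (gauss_weight_primitive_bounds h Hh).
  pose proof (gauss_weight_bounds h Hh).
  apply Rabs_le. nra.
Qed.
End GaussWeight.

Lemma abel_partial_sum_bound (a c : nat -> R) (M : R) :
  (forall k, c (S k) <= c k) -> (forall k, 0 <= c k) ->
  (forall N, Rabs (sum_n a N) <= M) ->
  forall N, Rabs (sum_n (fun k => a k * c k) N) <= M * c O.
Proof.
  intros Hdec Hpos HM.
  (* Summation by parts: the difference below is sum_(k < N) A_k (c_k - c_(k+1)),
     where A_k is the k-th partial sum of a. *)
  assert (Hparts : forall N,
    Rabs (sum_n (fun k => a k * c k) N - sum_n a N * c N) <= M * (c O - c N)).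
  { induction N as [|N IH].
    - rewrite !sum_O, Rminus_diag, Rabs_R0. lra.
    - rewrite !sum_Sn. change plus with Rplus.
      replace (sum_n (fun k => a k * c k) N + a (S N) * c (S N) - (sum_n a N + a (S N)) * c (S N))
        with ((sum_n (fun k => a k * c k) N - sum_n a N * c N) + sum_n a N * (c N - c (S N)))
        by ring.
      eapply Rle_trans; [apply Rabs_triang|].
      rewrite Rabs_mult, (Rabs_right (c N - c (S N))) by (specialize (Hdec N); lra).
      assert (Rabs (sum_n a N) * (c N - c (S N)) <= M * (c N - c (S N)))
        by (apply Rmult_le_compat_r; [specialize (Hdec N); lra | apply HM]).
      lra. }
  intros N.
  replace (sum_n (fun k => a k * c k) N)
    with ((sum_n (fun k => a k * c k) N - sum_n a N * c N) + sum_n a N * c N) by ring.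
  eapply Rle_trans; [apply Rabs_triang|].
  rewrite Rabs_mult, (Rabs_right (c N)) by (specialize (Hpos N); lra).
  assert (Rabs (sum_n a N) * c N <= M * c N)
    by (apply Rmult_le_compat_r; [apply Hpos | apply HM]).
  specialize (Hparts N). lra.
Qed.

Lemma sin_mul_sum_cos_even (x : R) (N : nat) :
  2 * sin x * sum_n (fun j => cos (2 * (INR j + 1) * x)) N
  = sin ((2 * INR N + 3) * x) - sin x.
Proof.
  induction N as [|N IH].
  - rewrite sum_O. simpl INR.
    replace ((2 * 0 + 3) * x) with (x + 2 * x) by ring.
    replace (2 * (0 + 1) * x) with (2 * x) by ring.
    rewrite sin_plus, sin_2a, cos_2a_sin.
    replace (cos x * (2 * sin x * cos x)) with (2 * sin x * (cos x)²) by (unfold Rsqr; ring).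
    rewrite cos2. unfold Rsqr. ring.
  - rewrite sum_Sn. change plus with Rplus.
    rewrite Rmult_plus_distr_l, IH, S_INR.
    replace ((2 * INR N + 3) * x) with (2 * (INR N + 1 + 1) * x - x) by ring.
    replace ((2 * (INR N + 1) + 3) * x) with (2 * (INR N + 1 + 1) * x + x) by ring.
    rewrite sin_plus, sin_minus. ring.
Qed.

Lemma sum_cos_even_bound (x : R) (N : nat) : 0 < sin x ->
  Rabs (sum_n (fun j => cos (2 * (INR j + 1) * x)) N) <= / sin x.
Proof.
  intros Hs.
  assert (Hsum := sin_mul_sum_cos_even x N).
  pose proof (SIN_bound ((2 * INR N + 3) * x)). pose proof (SIN_bound x).
  assert (Hb : Rabs (2 * sin x * sum_n (fun j => cos (2 * (INR j + 1) * x)) N) <= 2)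
    by (rewrite Hsum; apply Rabs_le; lra).
  rewrite Rabs_mult, (Rabs_right (2 * sin x)) in Hb by lra.
  apply (Rmult_le_reg_l (2 * sin x)); [lra|].
  replace (2 * sin x * / sin x) with 2 by (field; lra). exact Hb.
Qed.

Lemma cos_even_series_bound (x : R) (c : nat -> R) : 0 < sin x ->
  (forall k, c (S k) <= c k) -> (forall k, 0 <= c k) -> ex_series c ->
  ex_series (fun j => cos (2 * (INR j + 1) * x) * c j) /\
  Rabs (Series (fun j => cos (2 * (INR j + 1) * x) * c j)) <= / sin x * c O.
Proof.
  intros Hs Hdec Hpos Hc.
  assert (Hex : ex_series (fun j => cos (2 * (INR j + 1) * x) * c j)).
  { apply (@ex_series_le R_AbsRing R_CompleteNormedModule _ c); [|exact Hc].
    intros j. change (Rabs (cos (2 * (INR j + 1) * x) * c j) <= c j).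
    rewrite Rabs_mult, (Rabs_right (c j)) by (specialize (Hpos j); lra).
    pose proof (COS_bound (2 * (INR j + 1) * x)).
    assert (Rabs (cos (2 * (INR j + 1) * x)) <= 1) by (apply Rabs_le; lra).
    specialize (Hpos j). nra. }
  split; [exact Hex|].
  assert (Hab := abel_partial_sum_bound _ c _ Hdec Hpos (fun N => sum_cos_even_bound x N Hs)).
  apply (is_lim_seq_le _ _ (Rabs (Series _)) (/ sin x * c O) Hab).
  - apply (is_lim_seq_abs _ (Series _)). now apply Series_correct.
  - apply is_lim_seq_const.
Qed.

Lemma cos_gauss_series_bound (x theta h : R) : 0 < sin x -> 0 < theta -> 0 < h ->
  let c j := h * (h * gauss_weight theta ((INR j + 1) * h)) in
  ex_series (fun j => cos (2 * (INR j + 1) * x) * c j) /\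
  Rabs (Series (fun j => cos (2 * (INR j + 1) * x) * c j)) <= / sin x * (h * h * theta).
Proof.
  intros Hsx Htheta Hh c.
  assert (Hc_pos : forall j, 0 <= c j).
  { intros j. pose proof (pos_INR j).
    destruct (gauss_weight_bounds theta Htheta ((INR j + 1) * h)); [nra|].
    unfold c. assert (0 <= h * gauss_weight theta ((INR j + 1) * h)) by nra. nra. }
  assert (Hc_dec : forall j, c (S j) <= c j).
  { intros j. unfold c. rewrite S_INR. pose proof (pos_INR j).
    assert (gauss_weight theta ((INR j + 1 + 1) * h) <= gauss_weight theta ((INR j + 1) * h))
      by (apply gauss_weight_antitone; nra).
    apply Rmult_le_compat_l; [lra|]. apply Rmult_le_compat_l; lra. }
  assert (Hc_ex : ex_series c)
    by exact (ex_series_scal_l h _ (proj1 (gauss_riemann_sum theta Htheta h Hh))).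
  destruct (cos_even_series_bound x c Hsx Hc_dec Hc_pos Hc_ex) as [Hex Hbound].
  split; [exact Hex|].
  eapply Rle_trans; [exact Hbound|].
  apply Rmult_le_compat_l; [now apply Rlt_le, Rinv_0_lt_compat|].
  unfold c. simpl INR. rewrite Rplus_0_l, Rmult_1_l.
  destruct (gauss_weight_bounds theta Htheta h Hh). nra.
Qed.

Definition mesh (n : nat) : R := / sqrt (INR n).

Lemma mesh_gt0 (n : nat) : (1 <= n)%nat -> 0 < mesh n.
Proof.
  intros Hn. apply Rinv_0_lt_compat, sqrt_lt_R0, lt_0_INR. lia.
Qed.

Lemma termA4_eq (x theta : R) (n j : nat) : (1 <= n)%nat ->
  termA4 x theta n j = (1 - cos (2 * (INR j + 1) * x)) / 2
    * (mesh n * (mesh n * gauss_weight theta ((INR j + 1) * mesh n))).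
Proof.
  intros Hn. unfold termA4, gauss_weight. cbv zeta. rewrite S_INR.
  assert (Hk : 0 < INR j + 1) by (pose proof (pos_INR j); lra).
  assert (Hh := mesh_gt0 n Hn).
  assert (Hhh : mesh n * mesh n = / INR n).
  { unfold mesh. rewrite <- Rinv_mult, sqrt_sqrt; [reflexivity|apply pos_INR]. }
  set (k := INR j + 1) in *. set (h := mesh n) in *.
  replace (- theta * k ^ 2 / INR n) with (- (theta * (k * h * (k * h))))
    by (rewrite <- (Rinv_inv (INR n)), <- Hhh; field; apply Rgt_not_eq; lra).
  replace (2 * k * x) with (2 * (k * x)) by ring.
  rewrite cos_2a_sin. field. split; apply Rgt_not_eq; lra.
Qed.

Lemma termA4_series_error (x theta : R) (n : nat) :
  0 < sin x -> 0 < theta -> (1 <= n)%nat ->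
  ex_series (termA4 x theta n) /\
  Rabs (sqrt (INR n) * Series (termA4 x theta n) - sqrt (PI * theta) / 2)
    <= theta * (1 + / (2 * sin x)) * mesh n.
Proof.
  intros Hsx Htheta Hn.
  assert (Hh := mesh_gt0 n Hn).
  assert (Hsqrt : sqrt (INR n) = / mesh n) by (unfold mesh; now rewrite Rinv_inv).
  set (h := mesh n) in *.
  set (w j := h * gauss_weight theta ((INR j + 1) * h)).
  destruct (gauss_riemann_sum theta Htheta h Hh) as [Hw_ex Hw_err].
  destruct (cos_gauss_series_bound x theta h Hsx Htheta Hh) as [Hb_ex Hb].
  fold w in Hw_ex, Hw_err.
  set (c j := h * w j).
  set (b j := cos (2 * (INR j + 1) * x) * c j).
  change (ex_series b) in Hb_ex.
  change (Rabs (Series b) <= / sin x * (h * h * theta)) in Hb.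
  assert (Hterm : forall j, termA4 x theta n j = / 2 * c j - / 2 * b j).
  { intros j. rewrite termA4_eq by exact Hn. unfold b, c, w. fold h. field. }
  assert (Hhalf_c := ex_series_scal_l (/ 2) c (ex_series_scal_l h w Hw_ex)).
  assert (Hhalf_b := ex_series_scal_l (/ 2) b Hb_ex).
  split.
  { eapply ex_series_ext; [intros j; symmetry; apply Hterm|].
    now apply (ex_series_minus (fun j => / 2 * c j) (fun j => / 2 * b j)). }
  rewrite (Series_ext _ _ Hterm), Series_minus by assumption.
  rewrite !Series_scal_l. unfold c at 1. rewrite Series_scal_l, Hsqrt.
  replace (/ h * (/ 2 * (h * Series w) - / 2 * Series b) - sqrt (PI * theta) / 2)
    with (/ 2 * (Series w - sqrt (PI * theta)) - / 2 * (Series b * / h)) by (field; lra).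
  assert (Hb' : Rabs (Series b) * / h <= / sin x * (h * theta)).
  { apply (Rmult_le_reg_r h); [lra|].
    rewrite Rmult_assoc, Rinv_l by lra.
    pose proof (Rinv_0_lt_compat _ Hsx). nra. }
  eapply Rle_trans; [apply Rabs_triang|].
  rewrite Rabs_Ropp, !Rabs_mult, (Rabs_right (/ 2)), (Rabs_right (/ h))
    by (apply Rle_ge, Rlt_le, Rinv_0_lt_compat; lra).
  rewrite Rinv_mult.
  nra.
Qed.

Lemma is_lim_seq_of_mesh_bound (u : nat -> R) (l K : R) :
  (forall n, (1 <= n)%nat -> Rabs (u n - l) <= K * mesh n) -> is_lim_seq u l.
Proof.
  intros Hu.
  assert (Hmesh : is_lim_seq mesh 0).
  { apply (is_lim_seq_inv (fun n => sqrt (INR n)) p_infty); [|easy].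
    apply (is_lim_comp_seq sqrt INR p_infty p_infty).
    - exact (is_lim_sqrt_p _ _ (is_lim_id p_infty)).
    - now exists O.
    - exact is_lim_seq_INR. }
  apply (is_lim_seq_le_le_loc (fun n => l - K * mesh n) u (fun n => l + K * mesh n)).
  - exists 1%nat. intros n Hn. specialize (Hu n Hn). apply Rabs_le_between' in Hu. lra.
  - replace (Finite l) with (Finite (l - K * 0)) by (f_equal; ring).
    apply is_lim_seq_minus'; [apply is_lim_seq_const|apply (is_lim_seq_scal_l _ K 0 Hmesh)].
  - replace (Finite l) with (Finite (l + K * 0)) by (f_equal; ring).
    apply is_lim_seq_plus'; [apply is_lim_seq_const|apply (is_lim_seq_scal_l _ K 0 Hmesh)].
Qed.

Theorem lemmaA4 (x theta : R) (hx : 0 < x < PI) (htheta : 0 < theta) :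
  (forall n : nat, (1 <= n)%nat -> ex_series (termA4 x theta n)) /\
  is_lim_seq (fun n : nat => sqrt (INR n) * Series (termA4 x theta n))
             (sqrt (PI * theta) / 2).
Proof.
  assert (Hsx : 0 < sin x) by (apply sin_gt_0; lra).
  split.
  - intros n Hn. exact (proj1 (termA4_series_error x theta n Hsx htheta Hn)).
  - apply (is_lim_seq_of_mesh_bound _ _ (theta * (1 + / (2 * sin x)))).
    intros n Hn. exact (proj2 (termA4_series_error x theta n Hsx htheta Hn)).
Qed.
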